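(* Let $\mathbf x_1,\dots,\mathbf x_l\in\mathbb{R}^n$ and $y_1,\dots,y_l\in\{1,-1\}$; set $\bar{\mathbf x}_i=y_i\mathbf x_i$ and let $\overline{\mathbf X}\in\mathbb{R}^{l\times n}$ have $i$-th row $\bar{\mathbf x}_i^T$. For $C>0$ let $\mathbf w^*(C)$ be the optimal solution of the SVM problem $$\min_{\mathbf w}\tfrac12\|\mathbf w\|^2+C\sum_{i=1}^l\big[1-\mathbf w^T(y_i\mathbf x_i)\big]_+,$$ and $\theta^*(C)$ an optimal solution of its dual $\min_{\theta\in[0,1]^l}\frac C2\|\overline{\mathbf X}^T\theta\|^2-\sum_{i=1}^l\theta_i$. Let $0<C_1<\dots<C_{\mathcal K}$ and suppose $\mathbf w^*(C_k)$ is known for some integer $1\le k<\mathcal K$. If $$\tfrac{C_k+C_{k+1}}{2C_k}\langle\mathbf w^*(C_k),\bar{\mathbf x}_i\rangle-\tfrac{C_{k+1}-C_k}{2C_k}\|\mathbf w^*(C_k)\|\,\|\bar{\mathbf x}_i\|>1,$$ then $[\theta^*(C_{k+1})]_i=0$, i.e., $i\in\mathcal R$ (at $C=C_{k+1}$). Similarly, if $$\tfrac{C_k+C_{k+1}}{2C_k}\langle\mathbf w^*(C_k),\bar{\mathbf x}_i\rangle+\tfrac{C_{k+1}-C_k}{2C_k}\|\mathbf w^*(C_k)\|\,\|\bar{\mathbf x}_i\|<1,$$ then $[\theta^*(C_{k+1})]_i=1$, i.e., $i\in\mathcal L$.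
   Context: $[t]_+=\max\{t,0\}$. Primal and dual solutions satisfy $\mathbf w^*(C)=C\overline{\mathbf X}^T\theta^*(C)$. At parameter $C$: $\mathcal R=\{i:\langle\mathbf w^*(C),\bar{\mathbf x}_i\rangle>1\}$ and $\mathcal L=\{i:\langle\mathbf w^*(C),\bar{\mathbf x}_i\rangle<1\}$. *)

From HB Require Import structures.
From mathcomp Require Import all_boot all_order all_algebra.
From mathcomp Require Import reals.
Set Implicit Arguments. Unset Strict Implicit. Unset Printing Implicit Defensive.
Import Order.TTheory GRing.Theory Num.Theory.
Local Open Scope ring_scope.

Section SVM.
Variable R : realType.

Definition dotv n (u v : 'rV[R]_n) : R := \sum_(j < n) u 0 j * v 0 j.
Definition norm2 n (v : 'rV[R]_n) : R := Num.sqrt (dotv v v).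

Definition hinge (t : R) : R := Num.max t 0.

Definition Xbar l n (x : 'I_l -> 'rV[R]_n) (y : 'I_l -> R) : 'M[R]_(l, n) :=
  \matrix_(i < l, j < n) (y i * x i 0 j).

Definition xbar l n (x : 'I_l -> 'rV[R]_n) (y : 'I_l -> R) (i : 'I_l) : 'rV[R]_n :=
  row i (Xbar x y).

Definition svm_primal l n (x : 'I_l -> 'rV[R]_n) (y : 'I_l -> R) (C : R)
    (w : 'rV[R]_n) : R :=
  (norm2 w) ^+ 2 / 2 + C * \sum_(i < l) hinge (1 - dotv w (xbar x y i)).

Definition is_primal_opt l n (x : 'I_l -> 'rV[R]_n) (y : 'I_l -> R) (C : R)
    (w : 'rV[R]_n) : Prop :=
  forall v : 'rV[R]_n, svm_primal x y C w <= svm_primal x y C v.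

(* theta is a row vector in R^l; Xbar^T theta is represented as theta *m Xbar *)
Definition in_box l (th : 'rV[R]_l) : Prop := forall i, 0 <= th 0 i <= 1.

Definition svm_dual l n (x : 'I_l -> 'rV[R]_n) (y : 'I_l -> R) (C : R)
    (th : 'rV[R]_l) : R :=
  C / 2 * (norm2 (th *m Xbar x y)) ^+ 2 - \sum_(i < l) th 0 i.

Definition is_dual_opt l n (x : 'I_l -> 'rV[R]_n) (y : 'I_l -> R) (C : R)
    (th : 'rV[R]_l) : Prop :=
  in_box th /\ forall th' : 'rV[R]_l, in_box th' -> svm_dual x y C th <= svm_dual x y C th'.

End SVM.

From HB Require Import structures.
From mathcomp Require Import all_boot all_order all_algebra.
From mathcomp Require Import reals.
From mathcomp Require Import ring lra.
Set Implicit Arguments. Unset Strict Implicit. Unset Printing Implicit Defensive.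
Import Order.TTheory GRing.Theory Num.Theory.
Local Open Scope ring_scope.

(* Quadratic growth of the strongly convex primal objective P_C: a minimizer w
   satisfies P_C(v) >= P_C(w) + |v - w|^2 / 2.  Writing this at C_k and at
   C_{k+1} and combining the two inequalities so that the hinge terms cancel
   confines w*(C_{k+1}) to the ball of centre (C_k + C_{k+1}) / (2 C_k) w*(C_k)
   and radius (C_{k+1} - C_k) / (2 C_k) |w*(C_k)|; Cauchy-Schwarz turns this
   into the two bounds on <w*(C_{k+1}), xbar_i>.  On the dual side, the
   first-order conditions of the box QP show that C Xbar^T theta* is a primal
   minimizer, hence equals w*(C_{k+1}), and that theta*_i is 0 when
   <w, xbar_i> > 1 and 1 when <w, xbar_i> < 1. *)

Section InnerProduct.
Context {R : realType} {n : nat}.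
Implicit Types u v w z : 'rV[R]_n.

Lemma dotvC u v : dotv u v = dotv v u.
Proof. by apply: eq_bigr => j _; rewrite mulrC. Qed.

Lemma dotvDl u v w : dotv (u + v) w = dotv u w + dotv v w.
Proof. by rewrite /dotv -big_split; apply: eq_bigr => j _; rewrite mxE mulrDl. Qed.

Lemma dotvZl a u v : dotv (a *: u) v = a * dotv u v.
Proof. by rewrite /dotv mulr_sumr; apply: eq_bigr => j _; rewrite mxE mulrA. Qed.

Lemma dotvNl u v : dotv (- u) v = - dotv u v.
Proof. by rewrite -scaleN1r dotvZl mulN1r. Qed.

Lemma dotvBl u v w : dotv (u - v) w = dotv u w - dotv v w.
Proof. by rewrite dotvDl dotvNl. Qed.

Lemma dotvDr u v w : dotv w (u + v) = dotv w u + dotv w v.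
Proof. by rewrite dotvC dotvDl !(dotvC w). Qed.

Lemma dotvZr a u v : dotv v (a *: u) = a * dotv v u.
Proof. by rewrite dotvC dotvZl dotvC. Qed.

Lemma dotvBr u v w : dotv w (u - v) = dotv w u - dotv w v.
Proof. by rewrite dotvC dotvBl !(dotvC w). Qed.

Lemma dotvv_ge0 u : 0 <= dotv u u.
Proof. by apply: sumr_ge0 => j _; rewrite -expr2 sqr_ge0. Qed.

Lemma dotvv_eq0 u : dotv u u = 0 -> u = 0.
Proof.
move=> u0; apply/rowP => j; rewrite mxE.
have /eqP : u 0 j * u 0 j = 0.
  apply: (psumr_eq0P (P := predT) (F := fun j => u 0 j * u 0 j)) => // k _.
  by rewrite -expr2 sqr_ge0.
by rewrite mulf_eq0 orbb => /eqP.
Qed.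

Lemma norm2_ge0 u : 0 <= norm2 u.
Proof. exact: sqrtr_ge0. Qed.

Lemma sqr_norm2 u : norm2 u ^+ 2 = dotv u u.
Proof. by rewrite sqr_sqrtr // dotvv_ge0. Qed.

Lemma norm2N u : norm2 (- u) = norm2 u.
Proof. by rewrite /norm2 dotvNl dotvC dotvNl opprK. Qed.

Lemma norm2_le u r : 0 <= r -> dotv u u <= r ^+ 2 -> norm2 u <= r.
Proof. by move=> r0 ur; rewrite /norm2 -(ger0_norm r0) -sqrtr_sqr ler_sqrt ?sqr_ge0. Qed.

Lemma cauchy_schwarz u v : dotv u v <= norm2 u * norm2 v.
Proof.
set p := dotv u u; set s := dotv v v; set t := dotv u v.
have p0 : 0 <= p by apply: dotvv_ge0.
have s0 : 0 <= s by apply: dotvv_ge0.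
have t2_le : t ^+ 2 <= p * s.
  have [/dotvv_eq0 v0 | sn0] := eqVneq s 0.
    by rewrite /t v0 -(scale0r 0) dotvZr mul0r expr0n mulr_ge0.
  have sp : 0 < s by rewrite lt_def sn0 s0.
  (* |s u - t v|^2 = s (s p - t^2) *)
  have := dotvv_ge0 (s *: u - t *: v).
  rewrite !(dotvBl, dotvBr, dotvZl, dotvZr) -/p -/s -/t (dotvC v u) -/t.
  have -> : s * (s * p - t * t) - t * (s * t - t * s) = s * (s * p - t ^+ 2) by ring.
  by rewrite pmulr_rge0 // subr_ge0 mulrC.
have [t_le0 | t_gt0] := leP t 0.
  by apply: le_trans t_le0 _; rewrite mulr_ge0 ?norm2_ge0.
rewrite /norm2 -/p -/s -sqrtrM // -(gtr0_norm t_gt0) -sqrtr_sqr.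
by rewrite ler_sqrt ?mulr_ge0.
Qed.

Lemma dotv_ball c w z r : norm2 (c - w) <= r ->
  dotv c z - r * norm2 z <= dotv w z /\ dotv w z <= dotv c z + r * norm2 z.
Proof.
move=> cw_le.
have := cauchy_schwarz (c - w) z; have := cauchy_schwarz (w - c) z.
rewrite -[w - c]opprB norm2N dotvNl !dotvBl.
have : norm2 (c - w) * norm2 z <= r * norm2 z by rewrite ler_wpM2r ?norm2_ge0.
lra.
Qed.

Lemma dotv_mulmx l v (th : 'rV[R]_l) (X : 'M[R]_(l, n)) :
  dotv v (th *m X) = \sum_(j < l) th 0 j * dotv v (row j X).
Proof.
rewrite /dotv; under eq_bigr => k _ do rewrite mxE mulr_sumr.
rewrite exchange_big /=; apply: eq_bigr => j _; rewrite mulr_sumr.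
by apply: eq_bigr => k _; rewrite mxE mulrCA.
Qed.

End InnerProduct.

Section RealFacts.
Context {R : realType}.
Implicit Types t th m : R.

Lemma hinge_ge t : t <= hinge t.
Proof. by rewrite le_max lexx. Qed.

Lemma hinge_ge0 t : 0 <= hinge t.
Proof. by rewrite le_max lexx orbT. Qed.

Lemma hinge_convex a b t1 t2 : 0 <= a -> 0 <= b ->
  hinge (a * t1 + b * t2) <= a * hinge t1 + b * hinge t2.
Proof.
move=> a0 b0; rewrite ge_max; apply/andP; split.
  by apply: lerD; apply: ler_wpM2l => //; apply: hinge_ge.
by rewrite addr_ge0 // mulr_ge0 // hinge_ge0.
Qed.

Lemma mul_le_hinge th t : 0 <= th <= 1 -> th * t <= hinge t.
Proof.
move=> /andP[th0 th1]; have [t_le0 | t_gt0] := leP t 0.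
  by apply: le_trans (hinge_ge0 _); rewrite mulr_ge0_le0.
by apply: le_trans (hinge_ge _); rewrite ler_piMl // ltW.
Qed.

Lemma hinge_complementary th m : 0 <= th <= 1 ->
  (th < 1 -> 1 <= m) -> (0 < th -> m <= 1) -> hinge (1 - m) = th * (1 - m).
Proof.
move=> /andP[th0 th1] lt1 gt0; rewrite /hinge.
have [th_eq1 | th_n1] := eqVneq th 1.
  by rewrite th_eq1 mul1r max_l // subr_ge0 gt0 // th_eq1 ltr01.
have th_lt1 : th < 1 by rewrite lt_neqAle th_n1 th1.
have [th_eq0 | th_n0] := eqVneq th 0.
  by rewrite th_eq0 mul0r max_r // subr_le0 lt1.
have th_gt0 : 0 < th by rewrite lt_def th_n0 th0.
have -> : 1 - m = 0 by have := gt0 th_gt0; have := lt1 th_lt1; lra.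
by rewrite mulr0 max_r.
Qed.

Lemma ge0_of_small_steps (A q g : R) : 0 < A -> 0 <= q ->
  (forall t, 0 < t <= A -> 0 <= g + t * q) -> 0 <= g.
Proof.
move=> A0 q0 small; rewrite leNgt; apply/negP => g_lt0.
have Aq0 : 0 <= A * q by rewrite mulr_ge0 // ltW.
have d0 : 0 < A * q - g by lra.
(* the step t := A (-g) / (A q - g) lies in (0, A] and satisfies t q < - g *)
have t0 : 0 < A * - g / (A * q - g) by rewrite divr_gt0 ?mulr_gt0 ?oppr_gt0.
have tA : A * - g / (A * q - g) <= A.
  by rewrite ler_pdivrMr // ler_pM2l //; lra.
have := small _ (introT andP (conj t0 tA)).
have -> : g + A * - g / (A * q - g) * q = - g ^+ 2 / (A * q - g).
  by field; rewrite gt_eqF.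
by rewrite pmulr_lge0 ?invr_gt0 // oppr_ge0 leNgt exprn_even_gt0 //= lt_eqF.
Qed.

End RealFacts.

Section Primal.
Context {R : realType} {l n : nat} (x : 'I_l -> 'rV[R]_n) (y : 'I_l -> R).
Implicit Types (C : R) (u v w d : 'rV[R]_n).

Definition hinge_loss w := \sum_(i < l) hinge (1 - dotv w (xbar x y i)).

Lemma svm_primalE C w : svm_primal x y C w = dotv w w / 2 + C * hinge_loss w.
Proof. by rewrite /svm_primal sqr_norm2. Qed.

Lemma hinge_loss_convex w d t : 0 <= t <= 1 ->
  hinge_loss (w + t *: d) <= (1 - t) * hinge_loss w + t * hinge_loss (w + d).
Proof.
move=> /andP[t0 t1]; rewrite !mulr_sumr -big_split /=; apply: ler_sum => i _.
have -> : 1 - dotv (w + t *: d) (xbar x y i) =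
    (1 - t) * (1 - dotv w (xbar x y i)) + t * (1 - dotv (w + d) (xbar x y i)).
  by rewrite !dotvDl dotvZl; ring.
by apply: hinge_convex; rewrite ?subr_ge0.
Qed.

Lemma primal_opt_growth C w d : 0 <= C -> is_primal_opt x y C w ->
  svm_primal x y C w + dotv d d / 2 <= svm_primal x y C (w + d).
Proof.
move=> C0 w_opt; set q := dotv d d; have q0 : 0 <= q by apply: dotvv_ge0.
(* by convexity P_C(w + t d) - P_C(w) <= t g + t^2 q / 2, so minimality forces g >= 0 *)
set g := dotv w d + C * (hinge_loss (w + d) - hinge_loss w).
have g0 : 0 <= g.
  apply: (@ge0_of_small_steps _ 1 (q / 2)) => // [|t /andP[t0 t1]].
    by rewrite divr_ge0.
  have := w_opt (w + t *: d); rewrite !svm_primalE.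
  rewrite !(dotvDl, dotvDr, dotvZl, dotvZr) (dotvC d w) -/q => opt.
  have := hinge_loss_convex w d (introT andP (conj (ltW t0) t1)).
  move/(ler_wpM2l C0) => conv.
  rewrite -(pmulr_rge0 _ t0) /g; lra.
move: g0; rewrite /g !svm_primalE !(dotvDl, dotvDr) (dotvC d w) -/q; lra.
Qed.

Lemma primal_opt_unique C w w' : 0 <= C ->
  is_primal_opt x y C w -> is_primal_opt x y C w' -> w' = w.
Proof.
move=> C0 w_opt w'_opt.
have := primal_opt_growth (w' - w) C0 w_opt; rewrite [w + _]addrC subrK.
have := w'_opt w; have := dotvv_ge0 (w' - w) => ge0 le1 le2.
by apply/subr0_eq/dotvv_eq0/le_anti; rewrite ge0 andbT; lra.
Qed.

Lemma primal_opt_ball C1 C2 w1 w2 : 0 < C1 -> C1 <= C2 ->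
  is_primal_opt x y C1 w1 -> is_primal_opt x y C2 w2 ->
  norm2 ((C1 + C2) / (2 * C1) *: w1 - w2) <= (C2 - C1) / (2 * C1) * norm2 w1.
Proof.
move=> C1_gt0 C12 opt1 opt2; have C2_gt0 := lt_le_trans C1_gt0 C12.
set a := (C1 + C2) / (2 * C1); set b := (C2 - C1) / (2 * C1).
set N1 := dotv w1 w1; set N2 := dotv w2 w2; set M := dotv w1 w2.
have dist u v : dotv (u - v) (u - v) = dotv u u - 2 * dotv u v + dotv v v.
  by rewrite !(dotvBl, dotvBr) (dotvC v u); ring.
have := primal_opt_growth (w2 - w1) (ltW C1_gt0) opt1.
have := primal_opt_growth (w1 - w2) (ltW C2_gt0) opt2.
rewrite [w1 + (w2 - w1)]addrC [w2 + (w1 - w2)]addrC !subrK !svm_primalE !dist.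
rewrite (dotvC w2 w1) -/N1 -/N2 -/M.
move=> /(ler_wpM2l (ltW C1_gt0)) grow2 /(ler_wpM2l (ltW C2_gt0)) grow1.
(* in grow1 + grow2 the hinge terms cancel *)
have key : (C1 + C2) * (N1 - 2 * M + N2) <= (C2 - C1) * (N2 - N1) by lra.
have b_ge0 : 0 <= b by rewrite divr_ge0 ?subr_ge0 // mulr_ge0 // ltW.
apply: norm2_le; first by rewrite mulr_ge0 ?norm2_ge0.
rewrite exprMn sqr_norm2 -/N1 dist !dotvZl dotvZr -/N1 -/N2 -/M.
have C1sq_gt0 : 0 < 4 * C1 ^+ 2 by rewrite mulr_gt0 // exprn_gt0.
rewrite -subr_ge0 -(pmulr_rge0 _ C1sq_gt0).
have -> : 4 * C1 ^+ 2 * (b ^+ 2 * N1 - (a * (a * N1) - 2 * (a * M) + N2)) =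
    2 * C1 * ((C2 - C1) * (N2 - N1) - (C1 + C2) * (N1 - 2 * M + N2)).
  by rewrite /a /b; field; rewrite gt_eqF.
by rewrite mulr_ge0 ?subr_ge0 // mulr_ge0 // ltW.
Qed.

End Primal.

Section Dual.
Context {R : realType} {l n : nat} (x : 'I_l -> 'rV[R]_n) (y : 'I_l -> R).
Implicit Types (C s : R) (th : 'rV[R]_l) (j : 'I_l).

Definition primal_of_dual C th : 'rV[R]_n := C *: (th *m Xbar x y).

Lemma sum_delta_row j : \sum_(k < l) ('e_j : 'rV[R]_l) 0 k = 1.
Proof.
rewrite (bigD1 j) //= big1 ?addr0 => [|k /negbTE kj]; first by rewrite mxE !eqxx.
by rewrite mxE kj andbF.
Qed.

Lemma in_box_step th j s :
  in_box th -> 0 <= th 0 j + s <= 1 -> in_box (th + s *: 'e_j).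
Proof.
move=> th_box thj k; rewrite !mxE /=.
have [-> | kj] := eqVneq k j; first by rewrite mulr1.
by rewrite mulr0 addr0.
Qed.

Lemma svm_dual_step C th j s :
  svm_dual x y C (th + s *: 'e_j) = svm_dual x y C th
    + s * (dotv (primal_of_dual C th) (xbar x y j) - 1)
    + C / 2 * s ^+ 2 * dotv (xbar x y j) (xbar x y j).
Proof.
rewrite /svm_dual !sqr_norm2 mulmxDl -scalemxAl -rowE -/(xbar x y j).
have -> : \sum_(k < l) (th + s *: 'e_j) 0 k = \sum_(k < l) th 0 k + s.
  rewrite -[s in RHS]mulr1 -(sum_delta_row j) mulr_sumr -big_split /=.
  by apply: eq_bigr => k _; rewrite !mxE.
rewrite /primal_of_dual !(dotvDl, dotvDr, dotvZl, dotvZr) (dotvC (xbar x y j)).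
by field.
Qed.

Lemma dual_opt_step_ge0 C th j s : is_dual_opt x y C th ->
  0 <= th 0 j + s <= 1 ->
  0 <= s * (dotv (primal_of_dual C th) (xbar x y j) - 1)
       + s ^+ 2 * (C / 2 * dotv (xbar x y j) (xbar x y j)).
Proof.
move=> [th_box th_opt] thj.
have := th_opt _ (in_box_step th_box thj); rewrite svm_dual_step.
by rewrite -addrA lerDl mulrA [_ * s ^+ 2]mulrC.
Qed.

Lemma dual_opt_kkt C th j : 0 <= C -> is_dual_opt x y C th ->
  (th 0 j < 1 -> 1 <= dotv (primal_of_dual C th) (xbar x y j)) /\
  (0 < th 0 j -> dotv (primal_of_dual C th) (xbar x y j) <= 1).
Proof.
move=> C0 th_opt; have /andP[thj0 thj1] := th_opt.1 j.
pose g := dotv (primal_of_dual C th) (xbar x y j) - 1.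
pose Q := C / 2 * dotv (xbar x y j) (xbar x y j).
have Q0 : 0 <= Q by rewrite mulr_ge0 ?divr_ge0 ?dotvv_ge0.
have step s : 0 <= th 0 j + s <= 1 -> 0 <= s * g + s ^+ 2 * Q.
  exact: dual_opt_step_ge0.
split=> [thj_lt1 | thj_gt0].
  rewrite -subr_ge0; apply: (@ge0_of_small_steps _ (1 - th 0 j) Q) => //.
    by rewrite subr_gt0.
  move=> t /andP[t0 t1]; rewrite -(pmulr_rge0 _ t0) mulrDr mulrA -expr2.
  by apply: step; apply/andP; split; lra.
rewrite -subr_ge0; apply: (@ge0_of_small_steps _ (th 0 j) Q) => // t /andP[t0 t1].
rewrite -(pmulr_rge0 _ t0) mulrDr mulrA -expr2.
have : 0 <= - t * g + (- t) ^+ 2 * Q by apply: step; apply/andP; split; lra.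
rewrite sqrrN /g; lra.
Qed.

Lemma dual_opt_primal_opt C th : 0 <= C -> is_dual_opt x y C th ->
  is_primal_opt x y C (primal_of_dual C th).
Proof.
move=> C0 th_opt; have th_box := th_opt.1; set w := primal_of_dual C th.
have lagrangian v : \sum_(j < l) th 0 j * (1 - dotv v (xbar x y j)) =
    \sum_(j < l) th 0 j - dotv v (th *m Xbar x y).
  by rewrite dotv_mulmx -sumrB; apply: eq_bigr => j _; ring.
have loss_w : hinge_loss x y w = \sum_(j < l) th 0 j - dotv w (th *m Xbar x y).
  rewrite -lagrangian; apply: eq_bigr => j _.
  by have [] := dual_opt_kkt j C0 th_opt; apply: hinge_complementary.
move=> v; rewrite !svm_primalE loss_w.
have loss_v : \sum_(j < l) th 0 j - dotv v (th *m Xbar x y) <= hinge_loss x y v.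
  by rewrite -lagrangian; apply: ler_sum => j _; apply: mul_le_hinge.
have := ler_wpM2l C0 loss_v; have := dotvv_ge0 (v - w).
rewrite !(dotvBl, dotvBr) (dotvC w v) {2 4}/w /primal_of_dual !dotvZr; lra.
Qed.

Lemma dual_opt_screening C th w j : 0 <= C ->
  is_dual_opt x y C th -> is_primal_opt x y C w ->
  (1 < dotv w (xbar x y j) -> th 0 j = 0) /\ (dotv w (xbar x y j) < 1 -> th 0 j = 1).
Proof.
move=> C0 th_opt w_opt; have /andP[thj0 thj1] := th_opt.1 j.
have -> := primal_opt_unique C0 (dual_opt_primal_opt C0 th_opt) w_opt.
have [kkt_lt1 kkt_gt0] := dual_opt_kkt j C0 th_opt.
split=> [w_gt1 | w_lt1]; apply/le_anti/andP; split => //.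
- by rewrite leNgt; apply/negP => /kkt_gt0; lra.
- by rewrite leNgt; apply/negP => /kkt_lt1; lra.
Qed.
End Dual.

Theorem corollary4 (R : realType) (l n : nat)
    (x : 'I_l -> 'rV[R]_n) (y : 'I_l -> R)
    (hy : forall i, y i = 1 \/ y i = -1)
    (K : nat) (Cs : nat -> R)
    (hC1 : 0 < Cs 1%N)
    (hCinc : forall j : nat, (1 <= j)%N -> (j < K)%N -> Cs j < Cs j.+1)
    (k : nat) (hk1 : (1 <= k)%N) (hkK : (k < K)%N)
    (wk : 'rV[R]_n) (hwk : is_primal_opt x y (Cs k) wk)
    (wk1 : 'rV[R]_n) (hwk1 : is_primal_opt x y (Cs k.+1) wk1)
    (i : 'I_l) :
  let a := (Cs k + Cs k.+1) / (2 * Cs k) in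
  let b := (Cs k.+1 - Cs k) / (2 * Cs k) in
  (a * dotv wk (xbar x y i) - b * norm2 wk * norm2 (xbar x y i) > 1 ->
     (forall th : 'rV[R]_l, is_dual_opt x y (Cs k.+1) th -> th 0 i = 0)
     /\ dotv wk1 (xbar x y i) > 1)
  /\
  (a * dotv wk (xbar x y i) + b * norm2 wk * norm2 (xbar x y i) < 1 ->
     (forall th : 'rV[R]_l, is_dual_opt x y (Cs k.+1) th -> th 0 i = 1)
     /\ dotv wk1 (xbar x y i) < 1).
Proof.
move=> a b.
have Cs_gt0 j : (1 <= j)%N -> (j <= K)%N -> 0 < Cs j.
  elim: j => [// | [|j] IH _ jK]; first exact: hC1.
  exact: lt_trans (IH isT (ltnW jK)) (hCinc j.+1 isT jK).
have Ck_gt0 : 0 < Cs k by rewrite Cs_gt0 // ltnW.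
have Ck_lt : Cs k < Cs k.+1 by apply: hCinc.
have Ck1_ge0 : 0 <= Cs k.+1 by rewrite ltW // (lt_trans Ck_gt0).
have ball := primal_opt_ball Ck_gt0 (ltW Ck_lt) hwk hwk1.
have [lower upper] := dotv_ball (xbar x y i) ball; rewrite dotvZl -/a -/b in lower upper.
split=> bound.
  have wk1_gt1 : 1 < dotv wk1 (xbar x y i) by lra.
  by split=> // th th_opt; apply: (dual_opt_screening i Ck1_ge0 th_opt hwk1).1.
have wk1_lt1 : dotv wk1 (xbar x y i) < 1 by lra.
by split=> // th th_opt; apply: (dual_opt_screening i Ck1_ge0 th_opt hwk1).2.
Qed.
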